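(* For integers $1\le k\le n$, let $h_{k|n}(p)=\sum_{i=k}^{n}\binom{n}{i}p^i(1-p)^{n-i}$, $p\in[0,1]$, be the reliability function of a $k$-out-of-$n$ system with i.i.d. components each of reliability $p$, and let $R_{k|n}(p)=(1-p)\,h_{k|n}'(p)/(1-h_{k|n}(p))$ for $p\in(0,1)$. Then: (ii) for integers $1\le k\le n$ and $1\le l\le m$ with $l\le k$ and $n-k\le m-l$, the ratio $R_{k|n}(p)/R_{l|m}(p)$ is increasing in $p\in(0,1)$; (iii) for $1\le k\le n$, the function $p\,R_{k|n}'(p)/R_{k|n}(p)$ is decreasing in $p\in(0,1)$.
   Context: ''Increasing'' means non-decreasing and ''decreasing'' means non-increasing. A $k$-out-of-$n$ system functions as long as at least $k$ of its $n$ components function. (Part (i) of this lemma in the paper, that $R_{k|n}$ is increasing, is a cited result and is not included.) *)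

From Stdlib Require Import Reals.
From Coquelicot Require Import Coquelicot.
Open Scope R_scope.

Definition h_kn (k n : nat) (p : R) : R :=
  sum_n_m (fun i => Binomial.C n i * p ^ i * (1 - p) ^ (n - i)) k n.

Definition R_kn (k n : nat) (p : R) : R :=
  (1 - p) * Derive (h_kn k n) p / (1 - h_kn k n p).

(* "increasing" = non-decreasing, "decreasing" = non-increasing, on (0,1) *)
Definition incr_on01 (f : R -> R) : Prop :=
  forall p q, 0 < p -> p <= q -> q < 1 -> f p <= f q.
Definition decr_on01 (f : R -> R) : Prop :=
  forall p q, 0 < p -> p <= q -> q < 1 -> f q <= f p.

From Stdlib Require Import Reals Lra Lia.
From Coquelicot Require Import Coquelicot.
Open Scope R_scope.

(* Write t = (1 - p) / p and V_{n,k}(t) = sum_{j<k} C(n, k-1-j) t^j.  Since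
   h'_{k|n}(p) = (n-k+1) C(n,k-1) p^(k-1) (1-p)^(n-k) and
   1 - h_{k|n}(p) = p^(k-1) (1-p)^(n-k+1) V_{n,k}(t), we get
   R_{k|n}(p) = (n-k+1) C(n,k-1) / V_{n,k}(t), and logarithmic differentiation,
   using V_{n,k}(t) = C(n,k-1) + t V_{n,k-1}(t), gives
   p R'_{k|n}(p) / R_{k|n}(p) = (k-1) - (n-k+1) V_{n,k-1}(t) / V_{n,k}(t).
   As t decreases in p, both claims reduce to V_{m,l} / V_{n,k} decreasing in t
   when l <= k and n-k <= m-l (for (iii) take m = n, l = k-1).  This holds
   because the coefficient ratio C(m, l-1-j) / C(n, k-1-j) decreases in j, and
   a quotient of polynomials whose coefficient ratio decreases is decreasing
   on [0, +oo). *)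

Lemma sum_f_R0_rev (f : nat -> R) N :
  sum_f_R0 (fun j => f (N - j)%nat) N = sum_f_R0 f N.
Proof.
  induction N as [|N IH]; [reflexivity|].
  rewrite decomp_sum by lia. rewrite tech5, Nat.sub_0_r, <- IH. simpl pred.
  change (fun i => f (S N - S i)%nat) with (fun i => f (N - i)%nat). ring.
Qed.

Lemma sum_f_R0_pad (f : nat -> R) M N : (M <= N)%nat ->
  (forall j, (M < j <= N)%nat -> f j = 0) -> sum_f_R0 f N = sum_f_R0 f M.
Proof.
  intros HMN Hf. induction HMN as [|N HMN IH]; [reflexivity|].
  rewrite tech5, Hf, IH by (intros; try apply Hf; lia). ring.
Qed.

Lemma Rdiv_le_cross a b c d : 0 < b -> 0 < d -> a * d <= c * b -> a / b <= c / d.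
Proof.
  intros Hb Hd H. apply (Rmult_le_reg_r (b * d)); [nra|].
  replace (a / b * (b * d)) with (a * d) by (field; lra).
  replace (c / d * (b * d)) with (c * b) by (field; lra). exact H.
Qed.

Lemma pow_cross_le s t i N : 0 <= s <= t -> (i <= N)%nat ->
  s ^ N * t ^ i <= t ^ N * s ^ i.
Proof.
  intros Hst HiN. replace N with (i + (N - i))%nat by lia. rewrite !pow_add.
  assert (s ^ (N - i) <= t ^ (N - i)) by (apply pow_incr; lra).
  assert (0 <= s ^ i * t ^ i) by (apply Rmult_le_pos; apply pow_le; lra).
  nra.
Qed.

Definition poly_eval (c : nat -> R) (N : nat) (x : R) : R :=
  sum_f_R0 (fun j => c j * x ^ j) N.

Section PolyRatio.

Variables a b : nat -> R.

Lemma coef_ratio_pairs N :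
  (forall j, (j <= N)%nat -> 0 < b j) ->
  (forall j, (j < N)%nat -> a (S j) * b j <= a j * b (S j)) ->
  forall i j, (i <= j <= N)%nat -> a j * b i <= a i * b j.
Proof.
  intros Hb Hstep i j [Hij HjN]. induction Hij as [|j Hij IH]; [lra|].
  specialize (IH ltac:(lia)). specialize (Hstep j ltac:(lia)).
  pose proof (Hb i ltac:(lia)). pose proof (Hb j ltac:(lia)). pose proof (Hb (S j) HjN).
  apply (Rmult_le_reg_r (b j)); nra.
Qed.

Lemma poly_ratio_antitone N s t :
  (forall i j, (i <= j <= N)%nat -> a j * b i <= a i * b j) -> 0 <= s <= t ->
  poly_eval a N t * poly_eval b N s <= poly_eval a N s * poly_eval b N t.
Proof.
  intros Hab Hst. induction N as [|N IH].
  - unfold poly_eval; simpl; lra.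
  - (* Raising the degree to [S N] adds to A(t)B(s) - A(s)B(t) the sum of the
       [cross i], each of which is nonpositive. *)
    pose (cross i := (a (S N) * b i - a i * b (S N)) * (t ^ S N * s ^ i - s ^ S N * t ^ i)).
    assert (Hcross_sum : forall M, sum_f_R0 cross M =
      a (S N) * t ^ S N * poly_eval b M s - a (S N) * s ^ S N * poly_eval b M t
      - b (S N) * t ^ S N * poly_eval a M s + b (S N) * s ^ S N * poly_eval a M t).
    { unfold cross, poly_eval.
      induction M as [|M IHM]; [simpl; ring | rewrite !tech5, IHM; ring]. }
    assert (Hcross : sum_f_R0 cross N <= 0).
    { rewrite <- (Rmult_0_l (INR (S N))), <- sum_cte. apply sum_Rle. intros i Hi.
      assert (a (S N) * b i <= a i * b (S N)) by (apply Hab; lia).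
      assert (s ^ S N * t ^ i <= t ^ S N * s ^ i) by (apply pow_cross_le; auto).
      unfold cross. nra. }
    rewrite Hcross_sum in Hcross. specialize (IH ltac:(intros; apply Hab; lia)).
    unfold poly_eval in *. rewrite !tech5. nra.
Qed.

End PolyRatio.

(* Stdlib's [C n i] divides factorials with a truncated [n - i], so it is
   positive even for [i > n]. *)
Lemma C_pos n i : 0 < Binomial.C n i.
Proof.
  unfold Binomial.C. apply Rdiv_lt_0_compat; [apply INR_fact_lt_0|].
  apply Rmult_lt_0_compat; apply INR_fact_lt_0.
Qed.

Lemma C_succ_mul n i : (i < n)%nat ->
  Binomial.C n (S i) * INR (S i) = INR (n - i) * Binomial.C n i.
Proof. intros H. rewrite pascal_step3 by exact H. field. apply not_0_INR. lia. Qed.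

Lemma pow_pred_div (x : R) a : x <> 0 -> INR a * x ^ pred a = INR a * x ^ a / x.
Proof.
  intros Hx. destruct a as [|a]; simpl pred; [rewrite INR_0 | simpl]; field; exact Hx.
Qed.

Lemma is_derive_monomial (c : R) a e (x : R) :
  is_derive (fun y => c * y ^ a * (1 - y) ^ e) x
    (c * (INR a * x ^ pred a * (1 - x) ^ e - INR e * x ^ a * (1 - x) ^ pred e)).
Proof.
  auto_derive; [exact I|].
  (* [auto_derive] leaves an equation in [R_AbsRing], which [ring] does not recognize. *)
  match goal with |- ?u = ?v => change (@eq R u v) end. unfold Rminus. ring.
Qed.

Lemma Derive_div_log (f g : R -> R) x df dg :
  is_derive f x df -> is_derive g x dg -> f x <> 0 -> g x <> 0 ->
  Derive (fun y => f y / g y) x / (f x / g x) = df / f x - dg / g x.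
Proof.
  intros Hf Hg Hfx Hgx.
  rewrite (is_derive_unique _ _ _ (is_derive_div f g x df dg Hf Hg Hgx)).
  field. split; assumption.
Qed.

Definition binom_term (n : nat) (p : R) (i : nat) : R :=
  Binomial.C n i * p ^ i * (1 - p) ^ (n - i).

Lemma one_sub_h_kn k n p : (1 <= k <= n)%nat ->
  1 - h_kn k n p = sum_f_R0 (binom_term n p) (k - 1).
Proof.
  intros Hk.
  assert (Htotal : sum_n (binom_term n p) n = 1).
  { rewrite sum_n_Reals. unfold binom_term. rewrite <- binomial.
    replace (p + (1 - p)) with 1 by ring. apply pow1. }
  unfold sum_n in Htotal. rewrite (sum_n_m_Chasles _ 0 (k - 1) n) in Htotal by lia.
  replace (S (k - 1)) with k in Htotal by lia.
  change (sum_n_m (binom_term n p) 0 (k - 1)) with (sum_n (binom_term n p) (k - 1)) in Htotal.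
  rewrite sum_n_Reals in Htotal. unfold h_kn. unfold binom_term in *.
  change (plus ?x ?y) with (x + y) in Htotal. lra.
Qed.

Lemma is_derive_h_kn k n (p : R) : (1 <= k <= n)%nat ->
  is_derive (h_kn k n) p
    (INR (S (n - k)) * Binomial.C n (k - 1) * p ^ (k - 1) * (1 - p) ^ (n - k)).
Proof.
  intros Hk. remember (n - k)%nat as d eqn:Hd. revert k Hk Hd.
  induction d as [|d IH]; intros [|i] Hk Hd; try lia.
  - assert (n = S i) by lia. subst n.
    assert (HC := C_succ_mul (S i) i ltac:(lia)).
    rewrite Nat.sub_succ_l, Nat.sub_diag in HC by lia.
    replace (_ * _ * _ * _) with (Binomial.C (S i) (S i) *
      (INR (S i) * p ^ pred (S i) * (1 - p) ^ 0 - INR 0 * p ^ S i * (1 - p) ^ pred 0)).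
    2:{ rewrite Nat.sub_succ, Nat.sub_0_r, <- HC, INR_0. simpl pred. ring. }
    eapply is_derive_ext; [|apply is_derive_monomial].
    intros y. unfold h_kn. rewrite sum_n_n, Nat.sub_diag. reflexivity.
  - assert (HC := C_succ_mul n i ltac:(lia)).
    replace (n - i)%nat with (S (S d)) in HC by lia.
    replace (_ * _ * _ * _) with
      (Binomial.C n (S i) * (INR (S i) * p ^ pred (S i) * (1 - p) ^ S d
                            - INR (S d) * p ^ S i * (1 - p) ^ pred (S d))
       + INR (S d) * Binomial.C n (S i) * p ^ S i * (1 - p) ^ d).
    2:{ rewrite Nat.sub_succ, Nat.sub_0_r, <- HC. simpl pred. ring. }
    apply is_derive_ext with (f := fun y => binom_term n y (S i) + h_kn (S (S i)) n y).
    { intros y. unfold h_kn. rewrite (sum_Sn_m _ (S i) n) by lia. reflexivity. }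
    apply (is_derive_plus (fun y => binom_term n y (S i)) (h_kn (S (S i)) n)).
    + unfold binom_term. rewrite <- Hd. apply is_derive_monomial.
    + specialize (IH (S (S i)) ltac:(lia) ltac:(lia)).
      rewrite Nat.sub_succ, Nat.sub_0_r in IH. exact IH.
Qed.

Lemma is_derive_binom_cdf k n (p : R) : (1 <= k <= n)%nat ->
  is_derive (fun y => sum_f_R0 (binom_term n y) (k - 1)) p
    (- (INR (S (n - k)) * Binomial.C n (k - 1) * p ^ (k - 1) * (1 - p) ^ (n - k))).
Proof.
  intros Hk.
  apply is_derive_ext with (f := fun y => 1 - h_kn k n y); [intros; apply one_sub_h_kn, Hk|].
  rewrite <- Rminus_0_l.
  apply (is_derive_minus (fun _ => 1) (h_kn k n) p 0);
    [exact (is_derive_const (1 : R) p) | apply is_derive_h_kn, Hk].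
Qed.

(* The explicit zero beyond degree [k - 1] makes [tail_poly n 0 = 0] and lets
   tail polynomials of different degrees be compared over a common range. *)
Definition tail_coef (n k j : nat) : R :=
  if (j <? k)%nat then Binomial.C n (k - 1 - j) else 0.

Definition tail_poly (n k : nat) (t : R) : R := poly_eval (tail_coef n k) (k - 1) t.

Lemma tail_coef_nonneg n k j : 0 <= tail_coef n k j.
Proof. unfold tail_coef. destruct (j <? k)%nat; [left; apply C_pos | lra]. Qed.

Lemma tail_poly_pos n k t : (1 <= k)%nat -> 0 < t -> 0 < tail_poly n k t.
Proof.
  intros Hk Ht. apply tech1. intros j Hj. unfold tail_coef.
  destruct (Nat.ltb_spec j k); [|lia].
  apply Rmult_lt_0_compat; [apply C_pos | apply pow_lt, Ht].
Qed.

Lemma tail_poly_succ n k t : (1 <= k)%nat ->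
  tail_poly n k t = Binomial.C n (k - 1) + t * tail_poly n (k - 1) t.
Proof.
  intros Hk. destruct k as [|[|k]]; [lia| |].
  - unfold tail_poly, poly_eval, tail_coef. simpl. ring.
  - unfold tail_poly, poly_eval.
    replace (S (S k) - 1)%nat with (S k) by lia. replace (S k - 1)%nat with k by lia.
    rewrite decomp_sum, scal_sum by lia. simpl pred. f_equal.
    + unfold tail_coef. simpl. ring.
    + apply sum_eq. intros i Hi. unfold tail_coef.
      destruct (Nat.ltb_spec (S i) (S (S k))), (Nat.ltb_spec i (S k)); try lia.
      replace (S (S k) - 1 - S i)%nat with (S k - 1 - i)%nat by lia. simpl pow. ring.
Qed.

Lemma binom_cdf_tail_poly k n p : (1 <= k <= n)%nat -> p <> 0 ->
  sum_f_R0 (binom_term n p) (k - 1) =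
  p ^ (k - 1) * (1 - p) ^ S (n - k) * tail_poly n k ((1 - p) / p).
Proof.
  intros Hk Hp. set (t := (1 - p) / p).
  assert (Hq : 1 - p = p * t) by (unfold t; field; exact Hp).
  unfold tail_poly, poly_eval. rewrite <- sum_f_R0_rev, scal_sum.
  apply sum_eq. intros i Hi. unfold binom_term, tail_coef.
  destruct (Nat.ltb_spec i k); [|lia].
  rewrite Hq, !Rpow_mult_distr.
  replace (p ^ (n - (k - 1 - i))) with (p ^ i * p ^ S (n - k))
    by (rewrite <- pow_add; f_equal; lia).
  replace (t ^ (n - (k - 1 - i))) with (t ^ i * t ^ S (n - k))
    by (rewrite <- pow_add; f_equal; lia).
  replace (p ^ (k - 1)) with (p ^ (k - 1 - i) * p ^ i)
    by (rewrite <- pow_add; f_equal; lia).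
  ring.
Qed.

Lemma tail_coef_step_ratio n k m l : (l <= k)%nat -> (k <= n)%nat -> (l <= m)%nat ->
  (n - k <= m - l)%nat -> forall j,
  tail_coef m l (S j) * tail_coef n k j <= tail_coef m l j * tail_coef n k (S j).
Proof.
  intros Hlk Hkn Hlm Hd j. unfold tail_coef at 1.
  destruct (Nat.ltb_spec (S j) l) as [Hj|Hj].
  2:{ rewrite Rmult_0_l. apply Rmult_le_pos; apply tail_coef_nonneg. }
  unfold tail_coef. destruct (Nat.ltb_spec j l), (Nat.ltb_spec j k), (Nat.ltb_spec (S j) k); try lia.
  set (u := (l - 1 - S j)%nat). set (v := (k - 1 - S j)%nat).
  replace (l - 1 - j)%nat with (S u) by (unfold u; lia).
  replace (k - 1 - j)%nat with (S v) by (unfold v; lia).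
  rewrite !pascal_step3 by (unfold u, v; lia).
  assert (Hw : INR (n - v) * INR (S u) <= INR (m - u) * INR (S v)).
  { rewrite <- !mult_INR. apply le_INR. unfold u, v. nia. }
  assert (HC0 : 0 <= Binomial.C m u * Binomial.C n v)
    by (apply Rmult_le_pos; left; apply C_pos).
  assert (0 < INR (S u)) by apply lt_0_INR, Nat.lt_0_succ.
  assert (0 < INR (S v)) by apply lt_0_INR, Nat.lt_0_succ.
  apply (Rmult_le_reg_r (INR (S u) * INR (S v))); [nra|].
  replace (Binomial.C m u * (INR (n - v) / INR (S v) * Binomial.C n v) * (INR (S u) * INR (S v)))
    with (Binomial.C m u * Binomial.C n v * (INR (n - v) * INR (S u))) by (field; lra).
  replace (INR (m - u) / INR (S u) * Binomial.C m u * Binomial.C n v * (INR (S u) * INR (S v)))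
    with (Binomial.C m u * Binomial.C n v * (INR (m - u) * INR (S v))) by (field; lra).
  apply Rmult_le_compat_l; assumption.
Qed.

Lemma tail_poly_ratio_antitone n k m l s t : (1 <= k)%nat -> (l <= k)%nat -> (k <= n)%nat ->
  (l <= m)%nat -> (n - k <= m - l)%nat -> 0 < s <= t ->
  tail_poly m l t / tail_poly n k t <= tail_poly m l s / tail_poly n k s.
Proof.
  intros Hk Hlk Hkn Hlm Hd Hst.
  assert (Hpad : forall x, tail_poly m l x = poly_eval (tail_coef m l) (k - 1) x).
  { intros x. unfold tail_poly, poly_eval. symmetry. apply sum_f_R0_pad; [lia|].
    intros j Hj. unfold tail_coef. destruct (Nat.ltb_spec j l); [lia | ring]. }
  apply Rdiv_le_cross; [apply tail_poly_pos; [exact Hk | lra] ..|].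
  rewrite !Hpad. unfold tail_poly.
  apply poly_ratio_antitone; [|lra].
  apply coef_ratio_pairs.
  - intros j Hj. unfold tail_coef. destruct (Nat.ltb_spec j k); [apply C_pos | lia].
  - intros j _. apply tail_coef_step_ratio; assumption.
Qed.

Lemma odds_antitone p q : 0 < p -> p <= q -> q < 1 -> 0 < (1 - q) / q <= (1 - p) / p.
Proof.
  intros Hp Hpq Hq. split; [apply Rdiv_lt_0_compat; lra|].
  replace ((1 - q) / q) with (/ q - 1) by (field; lra).
  replace ((1 - p) / p) with (/ p - 1) by (field; lra).
  assert (/ q <= / p) by (apply Rinv_le_contravar; lra). lra.
Qed.

Lemma R_kn_closed k n p : (1 <= k <= n)%nat ->
  R_kn k n p = INR (S (n - k)) * Binomial.C n (k - 1) * p ^ (k - 1) * (1 - p) ^ S (n - k)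
               / sum_f_R0 (binom_term n p) (k - 1).
Proof.
  intros Hk. unfold R_kn.
  rewrite (is_derive_unique _ _ _ (is_derive_h_kn k n p Hk)), one_sub_h_kn by exact Hk.
  rewrite <- tech_pow_Rmult. unfold Rdiv. ring.
Qed.

Lemma R_kn_tail_poly k n p : (1 <= k <= n)%nat -> 0 < p < 1 ->
  R_kn k n p = INR (S (n - k)) * Binomial.C n (k - 1) / tail_poly n k ((1 - p) / p).
Proof.
  intros Hk Hp. rewrite R_kn_closed, binom_cdf_tail_poly by (auto; lra).
  assert (0 < tail_poly n k ((1 - p) / p))
    by (apply tail_poly_pos; [lia | apply Rdiv_lt_0_compat; lra]).
  assert (p ^ (k - 1) <> 0) by (apply pow_nonzero; lra).
  assert ((1 - p) ^ S (n - k) <> 0) by (apply pow_nonzero; lra).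
  field. repeat split; lra.
Qed.

Lemma R_kn_ratio_incr k n l m : (1 <= k)%nat -> (k <= n)%nat -> (1 <= l)%nat -> (l <= m)%nat ->
  (l <= k)%nat -> (n - k <= m - l)%nat -> incr_on01 (fun p => R_kn k n p / R_kn l m p).
Proof.
  intros Hk Hkn Hl Hlm Hlk Hd p q Hp Hpq Hq.
  destruct (odds_antitone p q Hp Hpq Hq) as [Htq Htqp].
  rewrite !R_kn_tail_poly by (auto; lra).
  set (c := INR (S (n - k)) * Binomial.C n (k - 1)).
  set (c' := INR (S (m - l)) * Binomial.C m (l - 1)).
  assert (Hc : 0 < c) by (apply Rmult_lt_0_compat; [apply lt_0_INR; lia | apply C_pos]).
  assert (Hc' : 0 < c') by (apply Rmult_lt_0_compat; [apply lt_0_INR; lia | apply C_pos]).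
  assert (Hratio : forall t, 0 < t ->
    c / tail_poly n k t / (c' / tail_poly m l t) = c / c' * (tail_poly m l t / tail_poly n k t)).
  { intros t Ht.
    assert (0 < tail_poly n k t) by (apply tail_poly_pos; [exact Hk | exact Ht]).
    assert (0 < tail_poly m l t) by (apply tail_poly_pos; [exact Hl | exact Ht]).
    field. repeat split; lra. }
  rewrite !Hratio by lra.
  apply Rmult_le_compat_l; [left; apply Rdiv_lt_0_compat; assumption|].
  apply tail_poly_ratio_antitone; auto; lra.
Qed.

Lemma R_kn_elasticity k n p : (1 <= k <= n)%nat -> 0 < p < 1 ->
  p * Derive (R_kn k n) p / R_kn k n p =
  INR (k - 1) - INR (S (n - k)) * (tail_poly n (k - 1) ((1 - p) / p) / tail_poly n k ((1 - p) / p)).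
Proof.
  intros Hk Hp.
  set (c := INR (S (n - k)) * Binomial.C n (k - 1)).
  set (num := fun y => c * y ^ (k - 1) * (1 - y) ^ S (n - k)).
  set (cdf := fun y => sum_f_R0 (binom_term n y) (k - 1)).
  set (t := (1 - p) / p).
  assert (Hq : 1 - p = p * t) by (unfold t; field; lra).
  assert (Ht : 0 < t) by (unfold t; apply Rdiv_lt_0_compat; lra).
  assert (Hc : 0 < c) by (apply Rmult_lt_0_compat; [apply lt_0_INR; lia | apply C_pos]).
  assert (HV := tail_poly_pos n k t ltac:(lia) Ht).
  assert (Hpa : 0 < p ^ (k - 1)) by (apply pow_lt; lra).
  assert (Hqb : 0 < (1 - p) ^ (n - k)) by (apply pow_lt; lra).
  assert (Hqb' : 0 < (1 - p) ^ S (n - k)) by (apply pow_lt; lra).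
  assert (Hcdf : cdf p = p ^ (k - 1) * (1 - p) ^ S (n - k) * tail_poly n k t)
    by (apply binom_cdf_tail_poly; lra || lia).
  assert (Hnum : num p <> 0)
    by (apply Rgt_not_eq; unfold num; apply Rmult_lt_0_compat; [apply Rmult_lt_0_compat|]; assumption).
  assert (Hcdf0 : cdf p <> 0)
    by (apply Rgt_not_eq; rewrite Hcdf; apply Rmult_lt_0_compat; [apply Rmult_lt_0_compat|]; assumption).
  assert (Hlog := Derive_div_log num cdf p _ _ (is_derive_monomial c (k - 1) (S (n - k)) p)
                    (is_derive_binom_cdf k n p Hk) Hnum Hcdf0).
  replace (p * Derive (R_kn k n) p / R_kn k n p)
    with (p * (Derive (fun y => num y / cdf y) p / (num p / cdf p))).
  2:{ rewrite (Derive_ext (R_kn k n) (fun y => num y / cdf y))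
        by (intros; apply R_kn_closed, Hk).
      rewrite R_kn_closed by exact Hk. unfold num, cdf, c, Rdiv. ring. }
  rewrite Hlog, Hcdf, pow_pred_div by lra.
  unfold num, c. simpl pred. simpl pow.
  rewrite (tail_poly_succ n k t) in HV |- * by lia. rewrite Hq in Hqb |- *.
  assert (0 < INR (S (n - k))) by (apply lt_0_INR; lia).
  pose proof (C_pos n (k - 1)).
  field. repeat split; lra.
Qed.

Lemma R_kn_elasticity_decr k n : (1 <= k)%nat -> (k <= n)%nat ->
  decr_on01 (fun p => p * Derive (R_kn k n) p / R_kn k n p).
Proof.
  intros Hk Hkn p q Hp Hpq Hq.
  destruct (odds_antitone p q Hp Hpq Hq) as [Htq Htqp].
  rewrite !R_kn_elasticity by (auto; lra).
  apply Rplus_le_compat_l, Ropp_le_contravar, Rmult_le_compat_l; [apply pos_INR|].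
  apply tail_poly_ratio_antitone; auto; try lia; lra.
Qed.

Theorem lemma2p4 :
  (forall k n l m : nat,
      (1 <= k)%nat -> (k <= n)%nat -> (1 <= l)%nat -> (l <= m)%nat ->
      (l <= k)%nat -> (n - k <= m - l)%nat ->
      incr_on01 (fun p => R_kn k n p / R_kn l m p))
  /\
  (forall k n : nat, (1 <= k)%nat -> (k <= n)%nat ->
      decr_on01 (fun p => p * Derive (R_kn k n) p / R_kn k n p)).
Proof. split; [exact R_kn_ratio_incr | exact R_kn_elasticity_decr]. Qed.
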